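(* Let $X$ be a regular closed subset of a topological space $T$ and $S$ a connected component of $-X$. If $-X$ has finitely many components, then $\delta S\subseteq X$. Alternatively, if $T$ is locally connected, then $\delta S\subseteq X$.
   Context: $-X$ denotes $\overline{T\setminus X}$, the closure of the complement of $X$. $\delta S=\overline{S}\setminus\mathrm{int}(S)$ is the boundary of $S$. A component is a maximal connected subset. $T$ is locally connected if every neighbourhood of every point includes a connected neighbourhood of that point. *)

From HB Require Import structures.
From mathcomp Require Import all_boot all_order all_algebra.
From mathcomp Require Import all_classical all_reals all_analysis.
Set Implicit Arguments. Unset Strict Implicit. Unset Printing Implicit Defensive.
Local Open Scope classical_set_scope.

(* -X : the closure of the complement of X *)
Definition cl_compl {T : topologicalType} (X : set T) : set T := closure (~` X).

Definition bdry {T : topologicalType} (S : set T) : set T := closure S `\` S°.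

Definition is_component {T : topologicalType} (A S : set T) : Prop :=
  [/\ S `<=` A, connected S &
      forall C : set T, connected C -> S `<=` C -> C `<=` A -> C = S].

Definition locally_connected_space (T : topologicalType) : Prop :=
  forall (x : T) (U : set T), nbhs x U ->
    exists V : set T, [/\ nbhs x V, connected V & V `<=` U].

From HB Require Import structures.
From mathcomp Require Import all_boot all_order all_algebra.
From mathcomp Require Import all_classical all_reals all_analysis.
Local Open Scope classical_set_scope.

(* Only the closedness of X matters. A component S of the closed set -X is
   closed, so a point x of δS outside X lies in S and has the open
   neighbourhood ~X inside -X. A component of a set A is a neighbourhood of
   each of its points around which A is a neighbourhood: with finitely many
   components, remove the closed union of the other components; in a locally
   connected space, a connected neighbourhood inside A merges with S. Hence x
   is interior to S, contradicting x ∈ δS. *)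

Section Components.
Variable T : topologicalType.
Implicit Types A S C : set T.

Lemma is_component_eq A S x :
  is_component A S -> S x -> S = connected_component A x.
Proof.
move=> [SA cS maxS] Sx; apply/esym/maxS.
- exact: component_connected.
- exact: connected_component_max.
- exact: connected_component_sub.
Qed.
Arguments is_component_eq {A S x}.

Lemma is_component_connected_component A x :
  A x -> is_component A (connected_component A x).
Proof.
move=> Ax; split; [exact: connected_component_sub|exact: component_connected|].
move=> C cC sC CA; apply/seteqP; split => //.
by apply: connected_component_max => //; apply: sC; exact: connected_component_refl.
Qed.

Lemma is_component_closed A S : closed A -> is_component A S -> closed S.
Proof.
move=> cA cS; have [->|/set0P[x Sx]] := eqVneq S set0; first exact: closed0.
by rewrite (is_component_eq cS Sx); exact: component_closed.
Qed.
Arguments is_component_closed {A S}.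

Lemma is_component_nbhs_finite A S x :
  closed A -> finite_set [set C | is_component A C] ->
  is_component A S -> S x -> nbhs x A -> nbhs x S.
Proof.
move=> cA finA cS Sx Ax.
set R := \bigcup_(C in [set C | is_component A C] `\ S) C.
have cR : closed R.
  apply: closed_bigcup; first exact: finite_setD.
  by move=> C [compC _]; exact: is_component_closed compC.
have nRx : ~ R x.
  move=> [C [compC CS] Cx]; apply: CS.
  by rewrite (is_component_eq compC Cx) (is_component_eq cS Sx).
have nR : nbhs x (~` R) by apply: open_nbhs_nbhs; split => //; exact: closed_openC.
apply: filterS (filterI Ax nR) => y [Ay nRy].
have [<-|neS] := pselect (connected_component A y = S).
  exact: connected_component_refl.
exfalso; apply: nRy; exists (connected_component A y).
  by split => //; exact: is_component_connected_component.
exact: connected_component_refl.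
Qed.

Lemma is_component_nbhs_locally_connected A S x :
  locally_connected_space T ->
  is_component A S -> S x -> nbhs x A -> nbhs x S.
Proof.
move=> lcT [SA cS maxS] Sx Ax.
have [V [Vx cV VA]] := lcT x A Ax.
have VS : V `|` S = S.
  apply: maxS.
  - by apply: connectedU => //; exists x; split => //; exact: nbhs_singleton.
  - by move=> y Sy; right.
  - by move=> y [/VA|/SA].
by apply: filterS Vx => y Vy; rewrite -VS; left.
Qed.

End Components.

Theorem lemma2p1 (T : topologicalType) (X S : set T) :
  regclosed X -> is_component (cl_compl X) S ->
  (finite_set [set C : set T | is_component (cl_compl X) C] -> bdry S `<=` X) /\
  (locally_connected_space T -> bdry S `<=` X).
Proof.
move=> rX cS.
have cA : closed (cl_compl X) by exact: closed_closure.
have cX : closed X by rewrite -rX; exact: closed_closure.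
have cSc : closed S by exact: is_component_closed cA cS.
have bdry_sub : (forall x, S x -> nbhs x (cl_compl X) -> nbhs x S) -> bdry S `<=` X.
  move=> intS x [clSx nintSx]; apply: contrapT => nXx; apply: nintSx.
  apply: intS; first by move: clSx; rewrite -(closure_id S).1.
  apply: (@filterS _ _ _ (~` X)); first exact: subset_closure.
  by apply: open_nbhs_nbhs; split => //; exact: closed_openC.
split=> [finA|lcT]; apply: bdry_sub => x Sx Ax.
- exact: is_component_nbhs_finite cA finA cS Sx Ax.
- exact: is_component_nbhs_locally_connected lcT cS Sx Ax.
Qed.
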